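(* Let $S\in\Delta^1_n$. Then $$\phi_S(z)=z^n+\sum_{j=1}^{\lfloor n/2\rfloor}(-1)^j c_{2j}(S)\,z^{n-2j},$$ where $c_{2j}(S)=|\pounds_{2j}|$ is the number of linear subsidigraphs of $S$ of order $2j$.
   Context: A sidigraph is a digraph (no loops, at most one arc from $u$ to $v$) with a sign $\sigma(a)\in\{-1,1\}$ on each arc $a$. Its adjacency matrix $A(S)=(a_{ij})$ has $a_{ij}=\sigma(v_i,v_j)$ if there is an arc from $v_i$ to $v_j$ and $0$ otherwise; $\phi_S(z)=\det(zI-A(S))$. The sign of a directed cycle is the product of the signs of its arcs; the cycle is positive or negative accordingly. A sidigraph is bipartite if its underlying digraph is bipartite. $\Delta^1_n$ is the class of bipartite sidigraphs on $n$ vertices in which every directed cycle of length $\equiv 0\pmod 4$ is negative and every directed cycle of length $\equiv 2\pmod 4$ is positive. A linear subsidigraph of order $k$ is a subsidigraph on $k$ vertices in which every vertex has indegree and outdegree $1$ (a vertex-disjoint union of directed cycles covering those $k$ vertices); $\pounds_k$ is the set of these. *)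

From HB Require Import structures.
From mathcomp Require Import all_boot all_order all_algebra.
Set Implicit Arguments. Unset Strict Implicit. Unset Printing Implicit Defensive.
Import Order.TTheory GRing.Theory Num.Theory.
Local Open Scope ring_scope.

(* A sidigraph on vertex set 'I_n: an arc relation [arc] (arc i j = there is
   an arc from v_i to v_j) and a sign [sigma i j] (only meaningful on arcs). *)

Definition loopless n (arc : rel 'I_n) : Prop := forall i, ~~ arc i i.

Definition signed n (arc : rel 'I_n) (sigma : 'I_n -> 'I_n -> int) : Prop :=
  forall i j, arc i j -> sigma i j = 1 \/ sigma i j = -1.

Definition adjmx n (arc : rel 'I_n) (sigma : 'I_n -> 'I_n -> int) : 'M[int]_n :=
  \matrix_(i, j) (if arc i j then sigma i j else 0).

Definition phiS n (arc : rel 'I_n) (sigma : 'I_n -> 'I_n -> int) : {poly int} :=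
  char_poly (adjmx arc sigma).

Definition bipartite n (arc : rel 'I_n) : Prop :=
  exists col : 'I_n -> bool, forall i j, arc i j -> col i != col j.

Definition dcycle n (arc : rel 'I_n) (s : seq 'I_n) : bool :=
  [&& s != [::], uniq s & cycle arc s].

Definition cycle_sign n (sigma : 'I_n -> 'I_n -> int) (s : seq 'I_n) : int :=
  \prod_(p <- zip s (rot 1 s)) sigma p.1 p.2.

Definition Delta1 n (arc : rel 'I_n) (sigma : 'I_n -> 'I_n -> int) : Prop :=
  [/\ loopless arc, signed arc sigma, bipartite arc &
      forall s, dcycle arc s ->
        ((size s %% 4 = 0)%N -> cycle_sign sigma s = -1) /\
        ((size s %% 4 = 2)%N -> cycle_sign sigma s = 1)].

Definition linear_sub n (arc : rel 'I_n) (k : nat)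
    (H : {set 'I_n} * {set 'I_n * 'I_n}) : bool :=
  let U := H.1 in let B := H.2 in
  [&& #|U| == k,
      [forall p in B, [&& arc p.1 p.2, p.1 \in U & p.2 \in U]],
      [forall u in U, #|[set p in B | p.1 == u]| == 1%N] &
      [forall u in U, #|[set p in B | p.2 == u]| == 1%N]].

Definition ck n (arc : rel 'I_n) (k : nat) : nat :=
  #|[set H | linear_sub arc k H]|.

From HB Require Import structures.
From mathcomp Require Import all_boot all_order all_algebra all_fingroup zify.
Set Implicit Arguments. Unset Strict Implicit. Unset Printing Implicit Defensive.
Import Order.TTheory GRing.Theory Num.Theory.
Local Open Scope ring_scope.

(* Expand det(zI - A(S)) by the Leibniz formula. As A(S) has a zero diagonal, a
   permutation s contributes sign(s) * prod_{s i <> i} (-a_{i,s i}) * z^(#fixed points),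
   which vanishes unless s moves every vertex along an arc; those permutations are
   in bijection with the linear subsidigraphs (vertices moved, arcs i -> s i). A
   nontrivial orbit of such an s is a directed cycle of S, of even length 2q since S
   is bipartite, and the Delta^1 sign rule makes its share
   (-1)^(2q-1) * (-1)^(2q) * sign(cycle) of the product equal to (-1)^q. So s
   contributes (-1)^(k/2) z^(n-k) with k = 2j the order of its subsidigraph. *)

Lemma map_traject (T : Type) (f : T -> T) x m :
  map f (traject f x m) = traject f (f x) m.
Proof. by elim: m x => //= m IHm x; rewrite IHm. Qed.

Lemma big_partition_card (I : finType) (V : nmodType) (P : pred I) (f : I -> nat)
    m (G : nat -> V) :
  (forall i, P i -> (f i <= m)%N) ->
  \sum_(i | P i) G (f i) = \sum_(k < m.+1) G k *+ #|[set i | P i & f i == k]|.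
Proof.
move=> le_f_m; rewrite (partition_big (fun i => inord (f i) : 'I_m.+1) xpredT) //=.
apply: eq_bigr => k _; rewrite -sumr_const; apply: eq_big => i.
  rewrite inE; apply: andb_id2l => Pi.
  by rewrite -(inj_eq val_inj) /= inordK // ltnS le_f_m.
by case/andP=> Pi /eqP <-; rewrite inordK // ltnS le_f_m.
Qed.

Lemma big_ord_even (V : nmodType) (F : nat -> V) m :
  (forall k, odd k -> F k = 0) ->
  \sum_(k < m) F k = \sum_(j < uphalf m) F j.*2.
Proof.
move=> F_odd; elim: m => [|m IHm]; first by rewrite !big_ord0.
rewrite big_ord_recr /= IHm uphalf_half.
have [odd_m | even_m] := boolP (odd m); first by rewrite F_odd // addr0.
by rewrite big_ord_recr /= even_halfK.
Qed.

Section PermutationOrbits.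
Variables (T : finType) (s : {perm T}).
Implicit Types (x y : T).

Lemma card_porbit1 x : (#|porbit s x| == 1%N) = (s x == x).
Proof.
apply/eqP/eqP => [orb1 | sx]; first by have := iter_porbit s x; rewrite orb1.
apply/eqP; rewrite eqn_leq lt0n card_porbit_neq0 andbT -(cards1 x).
by apply/subset_leq_card/subsetP => y /porbitP[i ->]; rewrite permX_fix ?set11.
Qed.

Lemma porbit_fixE x y : y \in porbit s x -> (s y == y) = (s x == x).
Proof. by rewrite -eq_porbit_mem => /eqP eq_orb; rewrite -!card_porbit1 eq_orb. Qed.

Lemma rot1_traject_porbit x :
  rot 1 (traject s x #|porbit s x|) = map s (traject s x #|porbit s x|).
Proof.
rewrite map_traject; case def_m: #|porbit s x| => [|m].
  by move: (card_porbit_neq0 s x); rewrite def_m.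
by rewrite trajectS rot1_cons trajectSr -iterSr -def_m iter_porbit.
Qed.

Lemma fcycle_traject_porbit x : fcycle s (traject s x #|porbit s x|).
Proof.
case def_m: #|porbit s x| => [|m].
  by move: (card_porbit_neq0 s x); rewrite def_m.
rewrite trajectS /= -[X in rcons _ X](iter_porbit s x) def_m iterSr -trajectSr.
exact: fpath_traject.
Qed.

Lemma big_porbits (R : Type) (idx : R) (op : Monoid.com_law idx) (P : pred T)
    (F : T -> R) :
  \big[op/idx]_(i | P i) F i =
  \big[op/idx]_(O in porbits s) \big[op/idx]_(i in O | P i) F i.
Proof.
rewrite (partition_big (porbit s) (mem (porbits s))) => [|i _]; last exact: imset_f.
apply: eq_bigr => O /imsetP[x _ ->]; apply: eq_bigl => i.
by rewrite eq_porbit_mem andbC.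
Qed.

Lemma sum_card_porbits : (\sum_(O in porbits s) #|O| = #|T|)%N.
Proof.
rewrite -sum1_card (big_porbits _ _ (fun=> 1%N)).
by apply: eq_bigr => O _; rewrite -sum1_card; apply: eq_bigl => i; rewrite inE andbT.
Qed.

Lemma sign_porbits : (-1) ^+ s = \prod_(O in porbits s) (-1) ^+ #|O|.-1 :> int.
Proof.
have card_T : #|T| = (\sum_(O in porbits s) #|O|.-1 + #|porbits s|)%N.
  rewrite -sum_card_porbits -sum1_card -big_split /=.
  by apply: eq_bigr => O /imsetP[x _ ->]; rewrite addn1 prednK ?lt0n ?card_porbit_neq0.
rewrite /odd_perm signr_addb !signr_odd card_T exprD -mulrA -exprD addnn.
by rewrite -[(-1) ^+ _.*2]signr_odd odd_double mulr1 prodrXr.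
Qed.

End PermutationOrbits.

Definition moved (T : finType) (s : {perm T}) : {set T} := [set i | s i != i].

Lemma moved_perm (T : finType) (s : {perm T}) i : (s i \in moved s) = (i \in moved s).
Proof. by rewrite !inE (inj_eq perm_inj). Qed.

Definition moves_along (T : finType) (arc : rel T) (s : {perm T}) : bool :=
  [forall i, (s i != i) ==> arc i (s i)].

Section CycleSigns.
Variables (n : nat) (arc : rel 'I_n) (sigma : 'I_n -> 'I_n -> int).

Lemma bipartite_cycle_even p : bipartite arc -> path.cycle arc p -> ~~ odd (size p).
Proof.
case=> col col_arc; case: p => [|x q] //= cyc.
have col_path y r : path arc y r -> col (last y r) = col y (+) odd (size r).
  elim: r y => [|z r IHr] y /=; first by rewrite addbF.
  case/andP=> /col_arc col_yz /IHr ->; move: col_yz.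
  by case: (col y); case: (col z); case: (odd _).
move: (col_path _ _ cyc); rewrite last_rcons size_rcons /=.
by case: (col x); case: (odd _).
Qed.

Lemma Delta1_cycle_sign p :
  Delta1 arc sigma -> dcycle arc p -> cycle_sign sigma p = - (-1) ^+ (size p)./2.
Proof.
case=> _ _ bip sign_cycles dcyc; have [sign0 sign2] := sign_cycles p dcyc.
have /even_halfK size_p : ~~ odd (size p).
  by case/and3P: dcyc => _ _; apply: bipartite_cycle_even.
move: sign0 sign2; rewrite -size_p doubleK -signr_odd; move: (size p)./2 => h.
case: (boolP (odd h)) => odd_h sign0 sign2.
  by rewrite sign2 ?opprK //; lia.
by rewrite sign0 ?opprK //; lia.
Qed.

End CycleSigns.

Lemma cycle_sign_porbit n (sigma : 'I_n -> 'I_n -> int) (s : 'S_n) x :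
  cycle_sign sigma (traject s x #|porbit s x|) = \prod_(y in porbit s x) sigma y (s y).
Proof.
rewrite /cycle_sign rot1_traject_porbit -[X in zip X](map_id) zip_map big_map /=.
rewrite big_uniq ?uniq_traject_porbit //; apply: eq_bigl => y.
by rewrite -porbit_traject.
Qed.

Section OrbitWeights.
Variables (n : nat) (arc : rel 'I_n) (sigma : 'I_n -> 'I_n -> int).
Hypothesis D1 : Delta1 arc sigma.
Variable s : 'S_n.
Hypothesis s_arc : moves_along arc s.

Lemma dcycle_porbit x : s x != x -> dcycle arc (traject s x #|porbit s x|).
Proof.
move=> sx; apply/and3P; split.
- by rewrite -size_eq0 size_traject card_porbit_neq0.
- exact: uniq_traject_porbit.
apply: (@sub_in_cycle _ (mem (porbit s x)) (frel s)); last first.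
- exact: fcycle_traject_porbit.
- by apply/allP=> y; rewrite -porbit_traject.
move=> y z /porbit_fixE orb_y _ /eqP <-.
by move/forallP/(_ y)/implyP: s_arc; apply; rewrite orb_y.
Qed.

Lemma porbit_weight x :
  (-1) ^+ #|porbit s x|.-1 * \prod_(i in porbit s x | s i != i) - sigma i (s i)
    = (-1) ^+ #|porbit s x|./2.
Proof.
have [sx | sx] := eqVneq (s x) x.
  rewrite big1 => [|i /andP[/porbit_fixE->]]; last by rewrite sx eqxx.
  by move/eqP: sx; rewrite -card_porbit1 => /eqP->.
rewrite (eq_bigl (mem (porbit s x))) => [|i]; last first.
  by rewrite /= andb_idr // => /porbit_fixE->.
rewrite prodrN -cycle_sign_porbit (Delta1_cycle_sign D1 (dcycle_porbit sx)).
have m_gt0 := card_porbit_neq0 s x.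
rewrite size_traject mulrA -exprD -signr_odd.
have -> : odd (#|porbit s x|.-1 + #|porbit s x|) by lia.
by rewrite mulrNN mul1r.
Qed.

Lemma card_moved_porbit x : #|porbit s x :&: moved s| = (#|porbit s x|./2).*2.
Proof.
have [sx | sx] := eqVneq (s x) x.
  have /eqP-> : #|porbit s x| == 1%N by rewrite card_porbit1 sx.
  apply/eqP; rewrite cards_eq0; apply/eqP/setP => i; rewrite !inE.
  by case: (boolP (_ \in _)) => //= /porbit_fixE->; rewrite sx eqxx.
have [_ _ bip _] := D1.
have /and3P[_ _ /(bipartite_cycle_even bip)] := dcycle_porbit sx.
rewrite size_traject => /even_halfK->; apply/eq_card=> i.
by rewrite !inE andb_idr // => /porbit_fixE->.
Qed.

Lemma card_moved_porbits : #|moved s| = (\sum_(O in porbits s) #|O|./2).*2.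
Proof.
rewrite (big_morph double doubleD double0) -sum1_card (big_porbits s).
apply: eq_bigr => O /imsetP[x _ ->]; rewrite -card_moved_porbit -sum1_card.
by apply: eq_bigl => i; rewrite !inE.
Qed.

Lemma odd_card_moved : odd #|moved s| = false.
Proof. by rewrite card_moved_porbits odd_double. Qed.

Lemma sign_moves_along :
  (-1) ^+ s * \prod_(i | s i != i) - sigma i (s i) = (-1) ^+ #|moved s|./2.
Proof.
rewrite card_moved_porbits doubleK sign_porbits (big_porbits s) -big_split -prodrXr.
by apply: eq_bigr => O /imsetP[x _ ->]; apply: porbit_weight.
Qed.

End OrbitWeights.

Definition perm_subdigraph (T : finType) (s : {perm T}) : {set T} * {set T * T} :=
  (moved s, [set (i, s i) | i in moved s]).

Lemma perm_subdigraph_inj (T : finType) : injective (@perm_subdigraph T).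
Proof.
move=> s1 s2 [moved12 graph12]; apply/permP => i.
have [i_moved | ] := boolP (i \in moved s1).
  have : (i, s1 i) \in [set (i, s1 i) | i in moved s1] by apply: imset_f.
  by rewrite graph12 => /imsetP[j _ [-> ->]].
move/setP/(_ i): moved12; rewrite !inE => moved_i /negbNE/eqP s1i.
by move: moved_i; rewrite s1i eqxx => /esym/negbFE/eqP->.
Qed.

Lemma linear_sub_perm_subdigraph n (arc : rel 'I_n) (s : 'S_n) :
  moves_along arc s -> linear_sub arc #|moved s| (perm_subdigraph s).
Proof.
move=> /forallP s_arc; apply/and4P; split => //=.
- apply/forallP => p; apply/implyP => /imsetP[i i_moved ->] /=.
  rewrite i_moved moved_perm i_moved !andbT.
  by move/implyP: (s_arc i); apply; rewrite inE in i_moved.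
- apply/forallP => u; apply/implyP => u_moved; apply/cards1P; exists (u, s u).
  apply/setP => p; rewrite !inE.
  apply/andP/eqP => [[/imsetP[i _ ->] /= /eqP-> //] | ->].
  by split=> //; apply: imset_f.
- apply/forallP => u; apply/implyP => u_moved; apply/cards1P; exists (s^-1 u, u)%g.
  apply/setP => p; rewrite !inE.
  apply/andP/eqP => [[/imsetP[i _ ->] /= /eqP<-] | ->]; first by rewrite permK.
  split=> //=; rewrite -{2}(permKV s u); apply: imset_f.
  by rewrite -moved_perm permKV.
Qed.

Section LinearSubdigraphPerm.
Variables (n k : nat) (arc : rel 'I_n) (U : {set 'I_n}) (B : {set 'I_n * 'I_n}).
Hypotheses (arc_loopless : loopless arc) (UB_linear : linear_sub arc k (U, B)).

Let B_arc p : p \in B -> [&& arc p.1 p.2, p.1 \in U & p.2 \in U].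
Proof. by case/and4P: UB_linear => _ /forallP/(_ p)/implyP. Qed.

Let outdeg1 u : u \in U -> #|[set p in B | p.1 == u]| == 1%N.
Proof. by case/and4P: UB_linear => _ _ /forallP/(_ u)/implyP. Qed.

Let indeg1 u : u \in U -> #|[set p in B | p.2 == u]| == 1%N.
Proof. by case/and4P: UB_linear => _ _ _ /forallP/(_ u)/implyP. Qed.

Definition linear_succ u : 'I_n := odflt u [pick v | (u, v) \in B].

Lemma linear_succ_arc u : u \in U -> (u, linear_succ u) \in B.
Proof.
move=> uU; rewrite /linear_succ; case: pickP => //= no_succ.
have /cards1P[[u' v] Bu] := outdeg1 uU.
have : (u', v) \in [set p in B | p.1 == u] by rewrite Bu set11.
by rewrite inE /= => /andP[+ /eqP eq_u']; rewrite eq_u' no_succ.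
Qed.

Lemma linear_succ_out u : u \notin U -> linear_succ u = u.
Proof.
move=> uU; rewrite /linear_succ; case: pickP => //= v /B_arc /and3P[_ /= uU' _].
by rewrite uU' in uU.
Qed.

Lemma linear_succ_inj : injective linear_succ.
Proof.
have succU u : u \in U -> linear_succ u \in U.
  by move/linear_succ_arc/B_arc/and3P=> [].
move=> u v eq_uv.
have [uU | uU] := boolP (u \in U); have [vU | vU] := boolP (v \in U).
- have /cards1P[p Bp] := indeg1 (succU u uU).
  have : (u, linear_succ u) \in [set p in B | p.2 == linear_succ u].
    by rewrite inE linear_succ_arc /=.
  have : (v, linear_succ v) \in [set p in B | p.2 == linear_succ u].
    by rewrite inE linear_succ_arc //= eq_uv.
  by rewrite Bp !inE => /eqP<- /eqP[->].
- by move: (succU u uU); rewrite eq_uv linear_succ_out // (negbTE vU).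
- by move: (succU v vU); rewrite -eq_uv linear_succ_out // (negbTE uU).
- by rewrite -(linear_succ_out uU) -(linear_succ_out vU).
Qed.

Definition linear_perm : 'S_n := perm linear_succ_inj.

Lemma moved_linear_perm : moved linear_perm = U.
Proof.
apply/setP => u; rewrite inE permE.
have [uU | uU] := boolP (u \in U); last by rewrite linear_succ_out ?eqxx.
have /B_arc/and3P[arc_u _ _] := linear_succ_arc uU.
by apply: contraTneq arc_u => /= ->; apply: arc_loopless.
Qed.

Lemma linear_perm_moves_along : moves_along arc linear_perm.
Proof.
apply/forallP => u; apply/implyP => u_moved.
have : u \in moved linear_perm by rewrite inE.
by rewrite moved_linear_perm permE => /linear_succ_arc/B_arc/and3P[].
Qed.

Lemma perm_subdigraph_linear_perm : perm_subdigraph linear_perm = (U, B).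
Proof.
rewrite /perm_subdigraph moved_linear_perm; congr pair; apply/setP => p.
apply/imsetP/idP => [[u uU ->] | Bp]; first by rewrite permE linear_succ_arc.
have /and3P[_ p1U _] := B_arc Bp; exists p.1 => //; rewrite permE.
have /cards1P[q Bq] := outdeg1 p1U.
have : p \in [set p' in B | p'.1 == p.1] by rewrite inE Bp eqxx.
have : (p.1, linear_succ p.1) \in [set p' in B | p'.1 == p.1].
  by rewrite inE linear_succ_arc ?eqxx.
by rewrite Bq !inE => /eqP-> /eqP.
Qed.

Lemma linear_sub_imset_perm_subdigraph :
  (U, B) \in [set perm_subdigraph s | s in [set s | moves_along arc s & #|moved s| == k]].
Proof.
apply/imsetP; exists linear_perm; last by rewrite perm_subdigraph_linear_perm.
rewrite inE linear_perm_moves_along moved_linear_perm.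
by case/and4P: UB_linear.
Qed.

End LinearSubdigraphPerm.

Lemma ck_moves_along n (arc : rel 'I_n) k : loopless arc ->
  ck arc k = #|[set s : 'S_n | moves_along arc s & #|moved s| == k]|.
Proof.
move=> arc_loopless; rewrite /ck -(card_imset _ (@perm_subdigraph_inj _)).
apply: eq_card => -[U B]; rewrite inE; apply/idP/idP.
  exact: linear_sub_imset_perm_subdigraph.
case/imsetP=> s; rewrite inE => /andP[s_arc /eqP<-] ->.
exact: linear_sub_perm_subdigraph.
Qed.

Lemma char_poly_diag0 (R : comNzRingType) n (A : 'M[R]_n) : (forall i, A i i = 0) ->
  char_poly A =
    \sum_(s : 'S_n)
      ((-1) ^+ s * \prod_(i | s i != i) - A i (s i))%:P * 'X^(n - #|moved s|).
Proof.
move=> A_diag0; apply: eq_bigr => s _.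
rewrite polyCM rmorph_sign -mulrA; congr (_ * _).
rewrite (bigID (fun i => s i == i)) /= mulrC rmorph_prod; congr (_ * _).
  by apply: eq_bigr => i /negbTE s_i; rewrite !mxE eq_sym s_i mulr0n sub0r rmorphN.
rewrite (eq_bigr (fun=> 'X)) => [|i /eqP s_i]; last first.
  by rewrite !mxE s_i eqxx A_diag0 subr0.
rewrite prodr_const; congr ('X^_).
rewrite -[X in (X - _)%N](card_ord n) -(cardC (moved s)) addKn.
by apply: eq_card => i; rewrite !inE negbK.
Qed.

Lemma ck0 n (arc : rel 'I_n) : ck arc 0 = 1%N.
Proof.
apply/eqP/cards1P; exists (set0, set0); apply/setP => -[U B]; rewrite !inE.
apply/idP/idP => [/and4P[/= U0 /forallP B_arc _ _] | /eqP[-> ->]].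
  rewrite cards_eq0 in U0; rewrite (eqP U0) xpair_eqE eqxx /=.
  apply/eqP/setP => p; rewrite inE; apply/negP => Bp.
  by move/implyP: (B_arc p) => /(_ Bp) /and3P[_]; rewrite (eqP U0) inE.
by apply/and4P; split; rewrite ?cards0 //; apply/forallP => ?; rewrite inE.
Qed.

Section Delta1Polynomial.
Variables (n : nat) (arc : rel 'I_n) (sigma : 'I_n -> 'I_n -> int).
Hypothesis D1 : Delta1 arc sigma.

Lemma phiS_moves_along :
  phiS arc sigma =
    \sum_(s : 'S_n | moves_along arc s) ((-1) ^+ #|moved s|./2)%:P * 'X^(n - #|moved s|).
Proof.
have [arc_loopless _ _ _] := D1.
rewrite /phiS char_poly_diag0 => [|i]; last by rewrite mxE (negbTE (arc_loopless i)).
rewrite [RHS]big_mkcond; apply: eq_bigr => s _; case: ifP => [s_arc | /negbT].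
  rewrite -(sign_moves_along D1 s_arc); congr ((_ * _)%:P * _).
  apply: eq_bigr => i s_i; rewrite mxE.
  by move/forallP/(_ i)/implyP: s_arc => /(_ s_i)->.
case/forallPn => i; rewrite negb_imply => /andP[s_i not_arc].
by rewrite (bigD1 i) //= mxE (negbTE not_arc) oppr0 mul0r mulr0 polyC0 mul0r.
Qed.

Lemma ck_odd k : odd k -> ck arc k = 0%N.
Proof.
have [arc_loopless _ _ _] := D1.
move=> odd_k; rewrite ck_moves_along //; apply/eqP; rewrite cards_eq0.
apply/eqP/setP => s; rewrite !inE; apply/negP => /andP[s_arc /eqP moved_k].
by move: odd_k; rewrite -moved_k (odd_card_moved D1 s_arc).
Qed.

End Delta1Polynomial.

Theorem theorem2p5 (n : nat) (arc : rel 'I_n) (sigma : 'I_n -> 'I_n -> int) :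
  Delta1 arc sigma ->
  phiS arc sigma =
    'X^n + \sum_(1 <= j < (n./2).+1)
             ((-1) ^+ j * (ck arc (2 * j))%:R) *: 'X^(n - 2 * j).
Proof.
move=> D1; have [arc_loopless _ _ _] := D1.
pose F k : {poly int} := ((-1) ^+ k./2)%:P * 'X^(n - k).
rewrite phiS_moves_along // (big_partition_card (m := n) F) => [|s _]; last first.
  by rewrite -[X in (_ <= X)%N](card_ord n) max_card.
under eq_bigr => k _ do rewrite -ck_moves_along //.
rewrite (@big_ord_even _ (fun k => F k *+ ck arc k)) => [|k /(ck_odd D1)->//].
rewrite big_ord_recl ck0 /F double0 expr0 mul1r subn0 big_add1 big_mkord; congr (_ + _).
apply: eq_bigr => j _; rewrite lift0 doubleK -mul2n -mul_polyC rmorphM /=.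
by rewrite rmorph_nat mulrAC mulr_natr.
Qed.
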